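(* Every path-connected almost totally disconnected compact space is a Corson compact, i.e. is homeomorphic to a subspace of $\Sigma[0,1]^\Gamma$ for some set $\Gamma$.
   Context: For a set $\Gamma$, $\Sigma[0,1]^\Gamma$ is the subspace of $[0,1]^\Gamma$ (product topology) of points with countable support (i.e. $x_\gamma\neq0$ for only countably many $\gamma$), and $\Sigma_0^1[0,1]^\Gamma$ is the subspace of $[0,1]^\Gamma$ consisting of those $x$ with $x_\gamma\in\{0,1\}$ for all but countably many $\gamma$. A compact space is almost totally disconnected if it is homeomorphic to a subspace of $\Sigma_0^1[0,1]^\Gamma$ for some set $\Gamma$. *)

From Stdlib Require Import Reals List Lra.
Open Scope R_scope.

Record space := Space {
  pt :> Type;
  is_open : (pt -> Prop) -> Prop;
  open_full : is_open (fun _ => True);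
  open_inter : forall U V, is_open U -> is_open V -> is_open (fun x => U x /\ V x);
  open_union : forall F : (pt -> Prop) -> Prop,
      (forall U, F U -> is_open U) -> is_open (fun x => exists U, F U /\ U x)
}.
Arguments is_open {s} U.

Definition continuous {X Y : space} (f : X -> Y) : Prop :=
  forall V : Y -> Prop, is_open V -> is_open (fun x => V (f x)).

Definition compact (X : space) : Prop :=
  forall F : (X -> Prop) -> Prop,
    (forall U, F U -> is_open U) ->
    (forall x, exists U, F U /\ U x) ->
    exists l : list (X -> Prop), Forall F l /\ (forall x, exists U, In U l /\ U x).

Definition I01 : Type := { r : R | 0 <= r <= 1 }.
Definition I0 : I01 := exist _ 0 (conj (Rle_refl 0) Rle_0_1).
Definition I1 : I01 := exist _ 1 (conj Rle_0_1 (Rle_refl 1)).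

Definition openI (U : I01 -> Prop) : Prop :=
  forall x, U x -> exists eps, 0 < eps /\
    forall y : I01, Rabs (proj1_sig y - proj1_sig x) < eps -> U y.

Lemma openI_full : openI (fun _ => True).
Proof. intros x _. exists 1. split; [lra|]; auto. Qed.

Lemma openI_inter U V : openI U -> openI V -> openI (fun x => U x /\ V x).
Proof.
  intros HU HV x [Ux Vx].
  destruct (HU x Ux) as [e1 [He1 H1]]. destruct (HV x Vx) as [e2 [He2 H2]].
  exists (Rmin e1 e2). split; [apply Rmin_pos; lra|].
  intros y Hy. split; [apply H1 | apply H2];
  [apply Rlt_le_trans with (1 := Hy); apply Rmin_l
  |apply Rlt_le_trans with (1 := Hy); apply Rmin_r].
Qed.

Lemma openI_union (F : (I01 -> Prop) -> Prop) :
  (forall U, F U -> openI U) -> openI (fun x => exists U, F U /\ U x).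
Proof.
  intros HF x [U [FU Ux]]. destruct (HF U FU x Ux) as [e [He H]].
  exists e. split; [exact He|]. intros y Hy. exists U. split; auto.
Qed.

Definition unit_interval : space :=
  Space I01 openI openI_full openI_inter openI_union.

Definition path_connected (X : space) : Prop :=
  forall x y : X, exists p : unit_interval -> X,
    continuous p /\ p I0 = x /\ p I1 = y.

(* The Tychonoff product [0,1]^Gamma: the topology generated by the subbasic
   sets {x | V (x g)} with V open in [0,1] (opens = unions of finite
   intersections of subbasic sets). *)
Definition openP (G : Type) (U : (G -> I01) -> Prop) : Prop :=
  forall x, U x -> exists l : list (G * (I01 -> Prop)),
    Forall (fun p => openI (snd p)) l /\
    Forall (fun p => snd p (x (fst p))) l /\
    (forall y, Forall (fun p => snd p (y (fst p))) l -> U y).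

Lemma openP_full G : openP G (fun _ => True).
Proof. intros x _. exists nil. repeat split; auto. Qed.

Lemma openP_inter G U V : openP G U -> openP G V -> openP G (fun x => U x /\ V x).
Proof.
  intros HU HV x [Ux Vx].
  destruct (HU x Ux) as [l1 [A1 [B1 C1]]]. destruct (HV x Vx) as [l2 [A2 [B2 C2]]].
  exists (l1 ++ l2). repeat split.
  - apply Forall_app; auto.
  - apply Forall_app; auto.
  - apply C1. apply Forall_app in H. tauto.
  - apply C2. apply Forall_app in H. tauto.
Qed.

Lemma openP_union G (F : ((G -> I01) -> Prop) -> Prop) :
  (forall U, F U -> openP G U) -> openP G (fun x => exists U, F U /\ U x).
Proof.
  intros HF x [U [FU Ux]]. destruct (HF U FU x Ux) as [l [A [B C]]].
  exists l. repeat split; auto. intros y Hy. exists U. split; auto.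
Qed.

Definition cube (G : Type) : space :=
  Space (G -> I01) (openP G) (openP_full G) (openP_inter G) (openP_union G).

Definition countable_set {G : Type} (P : G -> Prop) : Prop :=
  exists f : G -> nat, forall a b, P a -> P b -> f a = f b -> a = b.

Definition Sigma (G : Type) (x : G -> I01) : Prop :=
  countable_set (fun g => proj1_sig (x g) <> 0).

Definition Sigma01 (G : Type) (x : G -> I01) : Prop :=
  countable_set (fun g => proj1_sig (x g) <> 0 /\ proj1_sig (x g) <> 1).

Definition embeds_into (X Y : space) (S : Y -> Prop) : Prop :=
  exists f : X -> Y,
    (forall x, S (f x)) /\
    (forall a b, f a = f b -> a = b) /\
    continuous f /\
    (forall U : X -> Prop, is_open U ->
       exists V : Y -> Prop, is_open V /\ forall x, U x <-> V (f x)).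

Definition almost_totally_disconnected (X : space) : Prop :=
  compact X /\ exists G : Type, embeds_into X (cube G) (Sigma01 G).

Definition Corson_compact (X : space) : Prop :=
  compact X /\ exists G : Type, embeds_into X (cube G) (Sigma G).

(* Fix an embedding e : X -> [0,1]^G with image in Sigma_0^1 and a base
   point x0.  Reflecting, in every coordinate g with e(x0)_g = 1, the
   interval by v |-> 1 - v is a self-homeomorphism of the cube, so composing
   it with e gives a new embedding e'.  We show e'(y) has countable support:
   join x0 to y by a path p and look at the path q = e o p in the cube.
   If e'(y)_g <> 0 then either e(x0)_g lies strictly between 0 and 1, or
   e(x0)_g and e(y)_g are different values, and then by the intermediate
   value theorem the coordinate t |-> q(t)_g enters (0,1).  Since (0,1) is
   open and rational parameters are dense, it does so at a rational time;
   hence g lies in the countable union, over the rational times t, of the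
   countable sets {g | q(t)_g in (0,1)} (q(t) is in Sigma_0^1). *)

From Stdlib Require Import Reals ZArith Lra Lia List Classical ClassicalEpsilon
  FunctionalExtensionality ProofIrrelevance Cantor.
(* Imported last, so that its [compact] shadows the one of Reals. *)
Open Scope R_scope.

Local Notation val := (@proj1_sig R (fun r => 0 <= r <= 1)).

Definition inner (v : I01) : Prop := 0 < val v < 1.

Lemma inner_iff (v : I01) : inner v <-> val v <> 0 /\ val v <> 1.
Proof. destruct v as [r Hr]; unfold inner; simpl; lra. Qed.

Lemma I01_eq (a b : I01) : val a = val b -> a = b.
Proof. destruct a, b; simpl; intros ->. f_equal. apply proof_irrelevance. Qed.

(* The retraction of R onto [0,1]; it lets us apply real-analysis results
   to maps defined on [0,1] only. *)
Definition clampR (r : R) : R := Rmin 1 (Rmax 0 r).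

Lemma clampR_in r : 0 <= clampR r <= 1.
Proof. unfold clampR, Rmin, Rmax; repeat destruct Rle_dec; lra. Qed.

Definition clamp (r : R) : I01 := exist _ (clampR r) (clampR_in r).

Lemma clampR_lipschitz a b : Rabs (clampR a - clampR b) <= Rabs (a - b).
Proof.
  unfold clampR, Rmin, Rmax; repeat destruct Rle_dec;
  unfold Rabs; repeat destruct Rcase_abs; lra.
Qed.

Lemma clampR_id r : 0 <= r <= 1 -> clampR r = r.
Proof. unfold clampR, Rmin, Rmax; repeat destruct Rle_dec; lra. Qed.

Lemma clamp_I01 (t : I01) : clamp (val t) = t.
Proof. apply I01_eq; simpl; apply clampR_id, (proj2_sig t). Qed.

Lemma ball_open c eps : openI (fun s : I01 => Rabs (val s - c) < eps).
Proof.
  intros x Hx. exists (eps - Rabs (val x - c)). split; [lra|].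
  intros y Hy. unfold Rabs in *; repeat destruct Rcase_abs; lra.
Qed.

Lemma inner_open : openI inner.
Proof.
  intros x Hx. exists (Rmin (val x) (1 - val x)).
  unfold inner in *. split; [apply Rmin_pos; lra|]. intros y Hy.
  pose proof (Rmin_l (val x) (1 - val x)).
  pose proof (Rmin_r (val x) (1 - val x)).
  unfold Rabs in Hy; destruct Rcase_abs; lra.
Qed.

Lemma continuity_clamp_extension (g : unit_interval -> unit_interval) :
  continuous g -> continuity (fun r => val (g (clamp r))).
Proof.
  intros Hg x eps Heps. simpl. unfold R_dist.
  destruct (Hg _ (ball_open (val (g (clamp x))) eps) (clamp x)) as [d [Hd H]].
  { unfold Rminus; rewrite Rplus_opp_r, Rabs_R0; lra. }
  exists d. split; [lra|]. intros y [_ Hy]. apply H. simpl.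
  eapply Rle_lt_trans; [apply clampR_lipschitz | exact Hy].
Qed.

Lemma ivt_inner (g : unit_interval -> unit_interval) :
  continuous g -> val (g I0) <> val (g I1) -> exists t, inner (g t).
Proof.
  intros Hg Hne. apply NNPP; intro Hno.
  assert (Hbin : forall t, val (g t) = 0 \/ val (g t) = 1).
  { intro t. destruct (proj2_sig (g t)).
    destruct (Req_dec_T (val (g t)) 0); [now left|].
    destruct (Req_dec_T (val (g t)) 1); [now right|].
    exfalso; apply Hno; exists t; unfold inner; lra. }
  set (F := fun r => val (g (clamp r)) - /2).
  assert (HF : continuity F).
  { apply continuity_minus; [apply continuity_clamp_extension, Hg |].
    apply continuity_const; intros ? ?; reflexivity. }
  assert (HF01 : F 0 * F 1 <= 0).
  { unfold F. rewrite (clamp_I01 I0 : clamp 0 = I0), (clamp_I01 I1 : clamp 1 = I1).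
    destruct (Hbin I0) as [e0|e0], (Hbin I1) as [e1|e1]; rewrite e0, e1 in *; lra. }
  destruct (IVT_cor F 0 1 HF ltac:(lra) HF01) as [z [_ Hz]].
  unfold F in Hz. destruct (Hbin (clamp z)); lra.
Qed.

Definition rational_point (a b : nat) : I01 := clamp (INR a / (INR b + 1)).

(* Rational points are dense: with 1/N < eps, the point floor(t N)/N lies
   within 1/N of t. *)
Lemma rational_points_dense (t : I01) eps : 0 < eps ->
  exists a b, Rabs (val (rational_point a b) - val t) < eps.
Proof.
  intros Heps. destruct t as [t Ht]; simpl.
  destruct (INR_unbounded (/ eps)) as [n Hn].
  set (N := INR n + 1).
  assert (HN : /eps < N) by (unfold N; lra).
  assert (HN0 : 0 < N) by (pose proof (Rinv_0_lt_compat eps Heps); lra).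
  assert (HinvN : / N < eps).
  { rewrite <- (Rinv_inv eps). apply Rinv_lt_contravar; [|exact HN].
    apply Rmult_lt_0_compat; [apply Rinv_0_lt_compat|]; lra. }
  set (k := Int_part (t * N)).
  destruct (base_Int_part (t * N)) as [Hk1 Hk2]; fold k in Hk1, Hk2.
  assert (Hk0 : (0 <= k)%Z).
  { assert (Hk : (-1 < k)%Z) by (apply lt_IZR; nra). lia. }
  exists (Z.to_nat k), n.
  change (val (rational_point (Z.to_nat k) n)) with (clampR (INR (Z.to_nat k) / N)).
  rewrite (INR_IZR_INZ (Z.to_nat k)), Z2Nat.id by exact Hk0.
  assert (Hlo : IZR k / N <= t).
  { apply (Rmult_le_reg_r N); [exact HN0|]. unfold Rdiv.
    rewrite Rmult_assoc, Rinv_l, Rmult_1_r by lra. lra. }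
  assert (Hhi : t - / N < IZR k / N).
  { unfold Rdiv. apply (Rmult_lt_reg_r N); [exact HN0|].
    rewrite Rmult_minus_distr_r, Rmult_assoc, Rinv_l by lra. lra. }
  rewrite clampR_id.
  - fold N. unfold Rabs; destruct Rcase_abs; lra.
  - fold N. split; [|lra].
    apply Rmult_le_pos; [apply IZR_le, Hk0 | left; apply Rinv_0_lt_compat, HN0].
Qed.

(* Since (0,1) is open, a continuous path entering it does so at a
   rational time. *)
Lemma inner_at_rational_point (g : unit_interval -> unit_interval) t :
  continuous g -> inner (g t) -> exists a b, inner (g (rational_point a b)).
Proof.
  intros Hg Ht. destruct (Hg _ inner_open t Ht) as [d [Hd H]].
  destruct (rational_points_dense t d Hd) as [a [b Hab]].
  exists a, b. exact (H _ Hab).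
Qed.

Lemma continuous_comp {X Y Z : space} (f : X -> Y) (h : Y -> Z) :
  continuous f -> continuous h -> continuous (fun x => h (f x)).
Proof. intros Hf Hh V HV. exact (Hf _ (Hh _ HV)). Qed.

Lemma projection_continuous (G : Type) (g : G) :
  @continuous (cube G) unit_interval (fun z => z g).
Proof.
  intros W HW z Hz. exists ((g, W) :: nil). repeat split; auto.
  intros y Hy. inversion Hy; auto.
Qed.

Lemma coordinatewise_continuous (G : Type) (h : G -> I01 -> I01) :
  (forall g, @continuous unit_interval unit_interval (h g)) ->
  @continuous (cube G) (cube G) (fun z g => h g (z g)).
Proof.
  intros Hh V HV z Vz. destruct (HV _ Vz) as [l [Hopen [Hin Hsub]]].
  exists (map (fun p => (fst p, fun v => snd p (h (fst p) v))) l).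
  repeat split.
  - apply Forall_map. eapply Forall_impl; [|exact Hopen].
    intros [g W]; simpl. apply Hh.
  - apply Forall_map. eapply Forall_impl; [|exact Hin]. intros [g W]; auto.
  - intros y Hy. apply Hsub. apply Forall_map in Hy.
    eapply Forall_impl; [|exact Hy]. intros [g W]; auto.
Qed.

Lemma countable_subset {G : Type} (P Q : G -> Prop) :
  (forall g, P g -> Q g) -> countable_set Q -> countable_set P.
Proof. intros HPQ [f Hf]. exists f. intros a b Ha Hb. apply Hf; auto. Qed.

Lemma countable_union_nat2 {G : Type} (C : nat -> nat -> G -> Prop) (P : G -> Prop) :
  (forall a b, countable_set (C a b)) ->
  (forall g, P g -> exists a b, C a b g) ->
  countable_set P.
Proof.
  intros HC HP.
  destruct (choice (fun ab (f : G -> nat) =>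
      forall u v, C (fst ab) (snd ab) u -> C (fst ab) (snd ab) v -> f u = f v -> u = v))
    as [code Hcode].
  { intros [a b]; apply HC. }
  destruct (choice (fun g ab => P g -> C (fst ab) (snd ab) g)) as [index Hindex].
  { intro g. destruct (classic (P g)) as [Pg|nPg].
    - destruct (HP g Pg) as [a [b Hab]]. exists (a, b); auto.
    - exists (0%nat, 0%nat); tauto. }
  exists (fun g => to_nat (to_nat (index g), code (index g) g)).
  intros u v Hu Hv E.
  apply (f_equal of_nat) in E. rewrite !cancel_of_to in E. injection E as E1 E2.
  apply (f_equal of_nat) in E1. rewrite !cancel_of_to in E1.
  pose proof (Hindex u Hu) as Cu. pose proof (Hindex v Hv) as Cv.
  rewrite E1 in Cu, E2. exact (Hcode _ u v Cu Cv E2).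
Qed.

(* Along a path in Sigma_0^1[0,1]^G only countably many coordinates ever
   leave {0,1}: each must do so at a rational time, and at each time only
   countably many coordinates are outside {0,1}. *)
Lemma path_inner_coordinates_countable (G : Type) (q : unit_interval -> cube G) :
  continuous q -> (forall t, Sigma01 G (q t)) ->
  countable_set (fun g => exists t, inner (q t g)).
Proof.
  intros Hq HS.
  apply (countable_union_nat2
           (fun a b g => val (q (rational_point a b) g) <> 0 /\
                         val (q (rational_point a b) g) <> 1)).
  - intros a b. apply HS.
  - intros g [t Ht].
    destruct (inner_at_rational_point (fun s => q s g) t) as [a [b Hab]].
    + exact (continuous_comp q _ Hq (projection_continuous G g)).
    + exact Ht.
    + exists a, b. apply inner_iff, Hab.
Qed.

Definition reflect (v : I01) : I01.
Proof. exists (1 - val v). destruct (proj2_sig v); split; lra. Defined.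

(* Reflect the interval exactly when the reference value c equals 1, so
   that c itself is sent to 0 whenever c lies in {0,1}. *)
Definition flip_at (c v : I01) : I01 :=
  if Req_dec_T (val c) 1 then reflect v else v.

Definition flip {G : Type} (c z : G -> I01) : G -> I01 :=
  fun g => flip_at (c g) (z g).

Lemma flip_at_involutive c v : flip_at c (flip_at c v) = v.
Proof. unfold flip_at; destruct Req_dec_T; auto. apply I01_eq; simpl; ring. Qed.

Lemma flip_at_continuous c : @continuous unit_interval unit_interval (flip_at c).
Proof.
  unfold flip_at; destruct Req_dec_T; [|intros W HW; exact HW].
  intros W HW x Hx. destruct (HW _ Hx) as [d [Hd H]]. exists d; split; auto.
  intros y Hy. apply H. simpl.
  replace (1 - val y - (1 - val x)) with (- (val y - val x)) by ring.
  rewrite Rabs_Ropp; exact Hy.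
Qed.

Lemma flip_at_nonzero c v : val (flip_at c v) <> 0 -> inner c \/ val c <> val v.
Proof.
  unfold flip_at; destruct Req_dec_T as [E|E]; simpl; intro Hv.
  - right; lra.
  - destruct (Req_dec_T (val c) (val v)) as [Ecv|]; [left|now right].
    apply inner_iff; split; congruence.
Qed.

Lemma flip_involutive {G : Type} (c z : G -> I01) : flip c (flip c z) = z.
Proof. extensionality g. apply flip_at_involutive. Qed.

Lemma flip_continuous (G : Type) (c : G -> I01) :
  @continuous (cube G) (cube G) (flip c).
Proof.
  apply (coordinatewise_continuous G (fun g => flip_at (c g))).
  intro g; apply flip_at_continuous.
Qed.

Lemma flip_path_endpoint_in_Sigma (G : Type) (q : unit_interval -> cube G) :
  continuous q -> (forall t, Sigma01 G (q t)) -> Sigma G (flip (q I0) (q I1)).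
Proof.
  intros Hq HS. unfold Sigma.
  eapply countable_subset; [|exact (path_inner_coordinates_countable G q Hq HS)].
  intros g Hg. destruct (flip_at_nonzero _ _ Hg) as [Hin|Hne].
  - exists I0; exact Hin.
  - apply (ivt_inner (fun t => q t g)); [|exact Hne].
    exact (continuous_comp q _ Hq (projection_continuous G g)).
Qed.

Definition is_embedding {X Y : space} (f : X -> Y) : Prop :=
  (forall a b, f a = f b -> a = b) /\
  continuous f /\
  (forall U : X -> Prop, is_open U ->
     exists V : Y -> Prop, is_open V /\ forall x, U x <-> V (f x)).

Lemma embedding_involution_comp {X Y : space} (f : X -> Y) (h : Y -> Y) :
  is_embedding f -> continuous h -> (forall y, h (h y) = y) ->
  is_embedding (fun x => h (f x)).
Proof.
  intros [Hinj [Hf Hopen]] Hh Hinv. split; [|split].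
  - intros a b E. apply Hinj. rewrite <- (Hinv (f a)), E. apply Hinv.
  - exact (continuous_comp f h Hf Hh).
  - intros U HU. destruct (Hopen U HU) as [V [HV HUV]].
    exists (fun y => V (h y)). split; [exact (Hh V HV)|].
    intro x. rewrite Hinv. apply HUV.
Qed.

Theorem proposition1 (X : space) :
  compact X -> path_connected X -> almost_totally_disconnected X ->
  Corson_compact X.
Proof.
  intros Hc Hpath [_ [G [e [He01 He]]]]. split; [exact Hc|]. exists G.
  destruct (classic (inhabited X)) as [[x0]|Hempty].
  - exists (fun x => flip (e x0) (e x)). split.
    + intro y. destruct (Hpath x0 y) as [p [Hp [<- <-]]].
      apply (flip_path_endpoint_in_Sigma G (fun t => e (p t))).
      * exact (continuous_comp p e Hp (proj1 (proj2 He))).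
      * intro t; apply He01.
    + apply (embedding_involution_comp e (flip (e x0)) He).
      * apply flip_continuous.
      * apply flip_involutive.
  - exists e. split; [|exact He].
    intro x; exfalso; apply Hempty; constructor; exact x.
Qed.
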